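(* In the setting below, every coding scheme satisfies $\mathcal{L}_{\text{total}}\ge\mathcal{L}_{\text{total,lb}}:=\sum_{i\in\{3,4\}}\sum_{j=2Z+1}^{n}\mu^{(i)}_j$ (an empty sum being $0$).
   Context: Let $n,a,b,Z$ be positive integers with $\max\{a,b\}\le n\le a+b$ and $Z\le n$. Let $x=(x_1,\dots,x_n)^\top$ be a real random vector with $\mathbb{E}[x]=0$ and positive definite covariance $\Psi=\mathbb{E}[xx^\top]$, with Cholesky decomposition $\Psi=LL^\top$ ($L$ lower triangular with positive diagonal). Let $x^{(1)}=(x_1,\dots,x_a)^\top$, $x^{(2)}=(x_{n-b+1},\dots,x_n)^\top$. A coding scheme consists of matrices $E^{(1,3)},E^{(1,5)}\in\mathbb{R}^{Z\times a}$, $E^{(2,4)},E^{(2,5)}\in\mathbb{R}^{Z\times b}$, $E^{(5,6)}\in\mathbb{R}^{Z\times 2Z}$, $D^{(3)},D^{(4)}\in\mathbb{R}^{n\times 2Z}$; set $\phi^{(1,3)}=E^{(1,3)}x^{(1)}$, $\phi^{(1,5)}=E^{(1,5)}x^{(1)}$, $\phi^{(2,4)}=E^{(2,4)}x^{(2)}$, $\phi^{(2,5)}=E^{(2,5)}x^{(2)}$, $\phi^{(5,6)}=E^{(5,6)}\begin{bmatrix}\phi^{(1,5)}\\ \phi^{(2,5)}\end{bmatrix}$, $\hat x^{(3)}=D^{(3)}\begin{bmatrix}\phi^{(1,3)}\\ \phi^{(5,6)}\end{bmatrix}$, $\hat x^{(4)}=D^{(4)}\begin{bmatrix}\phi^{(2,4)}\\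 \phi^{(5,6)}\end{bmatrix}$. For task matrices $K^{(3)}\in\mathbb{R}^{m_3\times n}$, $K^{(4)}\in\mathbb{R}^{m_4\times n}$ the overall task loss is $\mathcal{L}_{\text{total}}=\sum_{i\in\{3,4\}}\mathbb{E}\|K^{(i)}x-K^{(i)}\hat x^{(i)}\|_2^2$. For $i\in\{3,4\}$ let $S^{(i)}=L^\top K^{(i)\top}K^{(i)}L$ with eigenvalues $\mu^{(i)}_1\ge\mu^{(i)}_2\ge\dots\ge\mu^{(i)}_n$. *)

From HB Require Import structures.
From mathcomp Require Import all_boot all_order all_algebra.
From mathcomp Require Import all_classical all_reals all_analysis.
Set Implicit Arguments. Unset Strict Implicit. Unset Printing Implicit Defensive.
Import Order.TTheory GRing.Theory Num.Theory.
Local Open Scope ring_scope.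

Definition first_block (R : pzRingType) (a n : nat) : 'M[R]_(a, n) :=
  \matrix_(i < a, j < n) ((j : nat) == i)%:R.

(* Selection of the last b coordinates: x^(2) = (x_{n-b+1},...,x_n)
   (0-based: indices n-b, ..., n-1). *)
Definition last_block (R : pzRingType) (b n : nat) : 'M[R]_(b, n) :=
  \matrix_(i < b, j < n) ((j : nat) == (n - b + i)%N)%:R.

Definition sorted_eigenvalues (R : realFieldType) (n : nat)
    (S : 'M[R]_n) (mu : seq R) : Prop :=
  [/\ size mu = n, sorted (fun x y => y <= x) mu &
      char_poly S = \prod_(m <- mu) ('X - m%:P)].

Definition posdef (R : realFieldType) (n : nat) (A : 'M[R]_n) : Prop :=
  A^T = A /\ forall v : 'cV[R]_n, v != 0 -> 0 < (v^T *m A *m v) 0 0.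

Definition cholesky (R : realFieldType) (n : nat) (A L : 'M[R]_n) : Prop :=
  [/\ forall i j : 'I_n, (i < j)%N -> L i j = 0,
      forall i : 'I_n, 0 < L i i & A = L *m L^T].

Definition sqnorm (R : pzRingType) (m : nat) (v : 'cV[R]_m) : R :=
  \sum_(k < m) v k 0 ^+ 2.

(* Write [Psi = L L^T].  All that decoder [i] receives is [N x] for a fixed matrix [N]
   with [2Z] rows, so its loss is the squared Frobenius norm of [K L - (K D) (N L)].  It
   therefore suffices to prove the Eckart-Young type bound: if [N] has [p] rows, then
   [|M - X N|_F^2] is at least the sum of all but the [p] largest eigenvalues of [M^T M].
   Let [Q] be the orthogonal projector onto the kernel of [N]: then [(M - X N) Q = M Q],
   projecting does not increase the Frobenius norm, and [tr Q >= n - p].  Diagonalising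
   [M^T M = P^* diag(d) P] gives [|M Q|_F^2 = sum_i d_i W_ii] for the projector
   [W = P Q P^*], whose diagonal entries lie in [0, 1] and sum to at least [n - p]; such
   a weighted sum of the sorted eigenvalues dominates the sum of the [n - p] smallest.
   The spectral theorem is used over the algebraic closure [R[i]]. *)

From HB Require Import structures.
From mathcomp Require Import all_boot all_order all_algebra.
From mathcomp Require Import all_classical all_reals all_analysis.
From mathcomp Require Import complex fingroup perm measurable_realfun lra.
Import Order.TTheory GRing.Theory Num.Theory.
Local Open Scope ring_scope.
Set Implicit Arguments. Unset Strict Implicit. Unset Printing Implicit Defensive.

Section TailSum.
Variable R : numDomainType.

Lemma sumr_geq_mkind p n (F : nat -> R) :
  \sum_(p <= j < n) F j = \sum_(j < n) (p <= j)%N%:R * F j.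
Proof.
rewrite big_geq_mkord big_mkcond /=; apply: eq_bigr => j _.
by case: leqP; rewrite ?mul1r ?mul0r.
Qed.

Lemma sum_tail_le_weighted n p (mu : seq R) (w : 'I_n -> R) :
  size mu = n -> sorted (fun x y => y <= x) mu -> {in mu, forall x, 0 <= x} ->
  (forall j, 0 <= w j <= 1) -> (n - p)%:R <= \sum_j w j ->
  \sum_(p <= j < n) mu`_j <= \sum_(j < n) mu`_j * w j.
Proof.
move=> size_mu sorted_mu mu_ge0 w01 sum_w.
have mu_le i j : (i <= j < n)%N -> mu`_j <= mu`_i.
  case/andP=> le_ij lt_jn.
  have ge_trans : transitive (fun x y : R => y <= x).
    by move=> x y z yx zy; exact: le_trans zy yx.
  apply: (sorted_leq_nth ge_trans (fun x => lexx x) 0 sorted_mu).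
  - by rewrite inE size_mu (leq_ltn_trans le_ij).
  - by rewrite inE size_mu.
  - exact: le_ij.
have nth_ge0 j : 0 <= mu`_j.
  case: (ltnP j n) => [jn|nj]; first by rewrite mu_ge0 ?mem_nth ?size_mu.
  by rewrite nth_default ?size_mu.
(* [c] is [mu_p], or the default [0] when [p >= n]. *)
pose c := mu`_p.
have c_le (j : 'I_n) : (j < p)%N -> c <= mu`_j.
  move=> jp; case: (ltnP p n) => [pn|np]; first by rewrite mu_le // (ltnW jp).
  by rewrite /c nth_default ?size_mu.
pose ind (j : nat) : R := (p <= j)%N%:R.
(* Both factors of [(mu_j - c) (w_j - ind j)] change sign at [j = p]. *)
have term (j : 'I_n) : c * (w j - ind j) <= mu`_j * (w j - ind j).
  have /andP[w_ge0 w_le1] := w01 j.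
  rewrite -subr_ge0 -mulrBl /ind; case: leqP => [pj|jp].
    by rewrite mulr_le0 // subr_le0 // mu_le // pj ltn_ord.
  by rewrite subr0 mulr_ge0 // subr_ge0 c_le.
have sum_ind : \sum_(j < n) ind j = (n - p)%:R.
  have := sumr_geq_mkind p n (fun _ => 1); rewrite sumr_const_nat => ->.
  by apply: eq_bigr => j _; rewrite mulr1.
rewrite sumr_geq_mkind -subr_ge0 -sumrB.
rewrite (eq_bigr (fun j : 'I_n => mu`_j * (w j - ind j))); last first.
  by move=> j _; rewrite mulrBr [_ * mu`_j]mulrC.
apply: le_trans (ler_sum _ (fun j _ => term j)).
by rewrite -mulr_sumr sumrB sum_ind mulr_ge0 ?nth_ge0 ?subr_ge0.
Qed.

End TailSum.

Lemma char_poly_conj (R : comNzRingType) n (A P P' : 'M[R]_n) :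
  P' *m P = 1%:M -> char_poly (P' *m A *m P) = char_poly A.
Proof.
move=> P'P; rewrite /char_poly /char_poly_mx.
have -> : 'X%:M - map_mx polyC (P' *m A *m P) =
    map_mx polyC P' *m ('X%:M - map_mx polyC A) *m map_mx polyC P.
  rewrite mulmxBr mulmxBl -!map_mxM; congr (_ - _).
  by rewrite scalar_mxC -mulmxA -map_mxM P'P map_mx1 mulmx1.
by rewrite !det_mulmx mulrAC -det_mulmx -map_mxM P'P map_mx1 det1 mul1r.
Qed.

Lemma char_poly_diag_perm (F : fieldType) n (d : 'rV[F]_n) (mu : seq F) :
  char_poly (diag_mx d) = \prod_(x <- mu) ('X - x%:P) ->
  exists s : 'S_n, forall j : 'I_n, mu`_j = d 0 (s j).
Proof.
rewrite char_poly_trig ?diag_mx_is_trig // => chd.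
have /tuple_permP[s ->] : perm_eq mu [tuple d 0 i | i < n].
  apply: prod_XsubC_eq; rewrite -chd big_tuple.
  by apply: eq_bigr => i _; rewrite tnth_mktuple mxE eqxx mulr1n.
by exists s => j; rewrite -tnth_nth !tnth_mktuple.
Qed.

Section OrthogonalProjectors.
Variable C : numClosedFieldType.
Local Open Scope sesquilinear_scope.

Lemma mul_tC_diag_ge0 m n (Y : 'M[C]_(m, n)) i : 0 <= (Y *m Y^t*) i i.
Proof. by rewrite mxE sumr_ge0 // => j _; rewrite !mxE mul_conjC_ge0. Qed.

Lemma trace_mul_tC_ge0 m n (Y : 'M[C]_(m, n)) : 0 <= \tr (Y *m Y^t*).
Proof. by apply: sumr_ge0 => i _; exact: mul_tC_diag_ge0. Qed.

Section Projector.
Variables (n : nat) (Q : 'M[C]_n).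
Hypotheses (Q_herm : Q^t* = Q) (Q_idem : Q *m Q = Q).

Lemma mul_proj_tC m (Y : 'M[C]_(m, n)) : Y *m Q *m (Y *m Q)^t* = Y *m Q *m Y^t*.
Proof. by rewrite trmx_mul map_mxM Q_herm mulmxA -(mulmxA Y) Q_idem. Qed.

Lemma trace_mul_proj_tC_le m (Y : 'M[C]_(m, n)) :
  \tr (Y *m Q *m (Y *m Q)^t*) <= \tr (Y *m Y^t*).
Proof.
have Qc_herm : (1%:M - Q)^t* = 1%:M - Q.
  by rewrite linearB /= map_mxB trmx1 map_mx1 Q_herm.
have Qc_idem : (1%:M - Q) *m (1%:M - Q) = 1%:M - Q.
  by rewrite mulmxBl mul1mx mulmxBr mulmx1 Q_idem subrr subr0.
have := trace_mul_tC_ge0 (Y *m (1%:M - Q)).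
rewrite trmx_mul map_mxM Qc_herm mulmxA -(mulmxA Y) Qc_idem.
by rewrite mulmxBr mulmx1 mulmxBl linearB subr_ge0 mul_proj_tC.
Qed.

Lemma proj_diag_ge0 i : 0 <= Q i i.
Proof. by have := mul_tC_diag_ge0 Q i; rewrite Q_herm Q_idem. Qed.

Lemma proj_diag_le1 i : Q i i <= 1.
Proof.
have Qii_ge0 := proj_diag_ge0 i.
have Qii_sq : Q i i * Q i i <= Q i i.
  rewrite [X in _ <= X](_ : _ = (Q *m Q^t*) i i); last by rewrite Q_herm Q_idem.
  rewrite mxE (bigD1 i) //= !mxE (geC0_conj Qii_ge0) lerDl.
  by rewrite sumr_ge0 // => j _; rewrite !mxE mul_conjC_ge0.
move: Qii_ge0; rewrite le0r => /orP[/eqP -> | Qii_gt0]; first exact: ler01.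
by rewrite -(ler_pM2l Qii_gt0) mulr1.
Qed.

Lemma proj_unitary_conj (P : 'M[C]_n) : P \is unitarymx ->
  [/\ (P *m Q *m P^t*)^t* = P *m Q *m P^t*,
      (P *m Q *m P^t*) *m (P *m Q *m P^t*) = P *m Q *m P^t*
    & \tr (P *m Q *m P^t*) = \tr Q].
Proof.
move=> /unitarymxP PPt; have PtP := mulmx1C PPt; split.
- by rewrite !trmx_mul !map_mxM trmxCK Q_herm mulmxA.
- by rewrite -!mulmxA (mulmxA (P^t*)) PtP mul1mx (mulmxA Q) Q_idem.
- by rewrite mxtrace_mulC mulmxA PtP mul1mx.
Qed.

End Projector.

Lemma kernel_projector p n (N : 'M[C]_(p, n)) : exists Q : 'M[C]_n,
  [/\ Q^t* = Q, Q *m Q = Q, N *m Q = 0 & (n - p)%:R <= \tr Q].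
Proof.
(* [K] is the orthogonal complement of the row space of [N], [U] an orthonormal
   basis of it. *)
pose K := orthomx Num.conj (mx_of_hermitian (hermitian1mx n)) N.
pose U := schmidt (row_base K).
have /unitarymxP UUt : U \is unitarymx by rewrite schmidt_unitarymx ?rank_leq_col.
have NUt : N *m U^t* = 0.
  apply/orthomx1P; rewrite orthomx_sym.
  by rewrite eqmx_schmidt_free ?row_base_free // eq_row_base.
exists (U^t* *m U); split.
- by rewrite trmx_mul map_mxM trmxCK.
- by rewrite mulmxA -(mulmxA _ U) UUt mulmx1.
- by rewrite mulmxA NUt mul0mx.
- rewrite mxtrace_mulC UUt mxtrace1 ler_nat rank_ortho.
  by rewrite leq_sub2l ?rank_leq_row.
Qed.

Lemma gram_spectral m n (M : 'M[C]_(m, n)) : exists (P : 'M[C]_n) (d : 'rV[C]_n),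
  [/\ P \is unitarymx, forall i, 0 <= d 0 i & M^t* *m M = P^t* *m diag_mx d *m P].
Proof.
set G := M^t* *m M.
have G_normal : G \is normalmx.
  by apply/normalmxP; rewrite /G trmx_mul map_mxM trmxCK.
have P_unitary := spectral_unitarymx G.
exists (spectralmx G), (spectral_diag G); split=> //; last first.
  by rewrite -invmx_unitary //; exact/orthomx_spectralP.
move=> i; set P := spectralmx G.
have D_gram : diag_mx (spectral_diag G) = (P *m M^t*) *m (P *m M^t*)^t*.
  rewrite trmx_mul map_mxM trmxCK !mulmxA -(mulmxA _ _ M) -/G.
  rewrite [in RHS](orthomx_spectralP G_normal) invmx_unitary // -/P.
  by rewrite !mulmxA (unitarymxP P_unitary) mul1mx -mulmxA (unitarymxP P_unitary) mulmx1.
by have := mul_tC_diag_ge0 (P *m M^t*) i; rewrite -D_gram mxE eqxx mulr1n.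
Qed.

Lemma sum_tail_eigenvalues_le_trace_proj m n p (M : 'M[C]_(m, n)) (Q : 'M[C]_n)
    (mu : seq C) :
  Q^t* = Q -> Q *m Q = Q -> (n - p)%:R <= \tr Q ->
  size mu = n -> sorted (fun x y => y <= x) mu ->
  char_poly (M^t* *m M) = \prod_(x <- mu) ('X - x%:P) ->
  \sum_(p <= j < n) mu`_j <= \tr (M *m Q *m (M *m Q)^t*).
Proof.
move=> Q_herm Q_idem trQ size_mu sorted_mu char_mu.
have [P [d [P_unitary d_ge0 MtM]]] := gram_spectral M.
have PtP : P^t* *m P = 1%:M by apply/mulmx1C/unitarymxP.
pose W := P *m Q *m P^t*.
have [W_herm W_idem trW] := proj_unitary_conj Q_herm Q_idem P_unitary.
have [s mu_d] : exists s : 'S_n, forall j : 'I_n, mu`_j = d 0 (s j).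
  by apply: char_poly_diag_perm; rewrite -char_mu MtM char_poly_conj.
have trMQ : \tr (M *m Q *m (M *m Q)^t*) = \sum_i d 0 i * W i i.
  rewrite mul_proj_tC // mxtrace_mulC mulmxA MtM -!mulmxA mxtrace_mulC -!mulmxA.
  rewrite (mulmxA P) -/W mul_diag_mx /mxtrace.
  by apply: eq_bigr => i _; rewrite mxE.
have mu_ge0 : {in mu, forall x, 0 <= x}.
  move=> _ /(nthP 0)[j j_lt <-]; rewrite size_mu in j_lt.
  by rewrite (mu_d (Ordinal j_lt)).
have w01 j : 0 <= W (s j) (s j) <= 1 by rewrite proj_diag_ge0 ?proj_diag_le1.
have sum_w : (n - p)%:R <= \sum_j W (s j) (s j).
  suff -> : \sum_j W (s j) (s j) = \tr W by rewrite trW.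
  by rewrite /mxtrace [RHS](reindex_inj (@perm_inj _ s)).
rewrite trMQ (reindex_inj (@perm_inj _ s)) /=.
under [X in _ <= X]eq_bigr do rewrite -mu_d.
exact: sum_tail_le_weighted size_mu sorted_mu mu_ge0 w01 sum_w.
Qed.

Lemma sum_tail_eigenvalues_le_lowrank_residualC m n p (M : 'M[C]_(m, n))
    (N : 'M[C]_(p, n)) (X : 'M[C]_(m, p)) (mu : seq C) :
  size mu = n -> sorted (fun x y => y <= x) mu ->
  char_poly (M^t* *m M) = \prod_(x <- mu) ('X - x%:P) ->
  \sum_(p <= j < n) mu`_j <= \tr ((M - X *m N) *m (M - X *m N)^t*).
Proof.
move=> size_mu sorted_mu char_mu.
have [Q [Q_herm Q_idem NQ trQ]] := kernel_projector N.
have RQ : (M - X *m N) *m Q = M *m Q by rewrite mulmxBl -mulmxA NQ mulmx0 subr0.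
apply: le_trans (trace_mul_proj_tC_le Q_herm Q_idem (M - X *m N)); rewrite RQ.
exact: sum_tail_eigenvalues_le_trace_proj.
Qed.

End OrthogonalProjectors.

Lemma sum_tail_eigenvalues_le_lowrank_residual (R : rcfType) m n p (M : 'M[R]_(m, n))
    (N : 'M[R]_(p, n)) (X : 'M[R]_(m, p)) (mu : seq R) :
  sorted_eigenvalues (M^T *m M) mu ->
  \sum_(p <= j < n) mu`_j <= \tr ((M - X *m N) *m (M - X *m N)^T).
Proof.
case=> size_mu sorted_mu char_mu.
pose f := real_complex R.
have map_tC k l (A : 'M[R]_(k, l)) : ((map_mx f A)^t*)%sesqui = map_mx f A^T.
  by apply/matrixP => i j; rewrite !mxE; apply: conjc_real.
have size_fmu : size (map f mu) = n by rewrite size_map.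
have sorted_fmu : sorted (fun x y => y <= x) (map f mu).
  by rewrite sorted_map; apply: sub_sorted sorted_mu => x y /=; rewrite lecR.
have char_fmu : char_poly ((map_mx f M)^t* *m map_mx f M)%sesqui =
    \prod_(x <- map f mu) ('X - x%:P).
  rewrite map_tC -map_mxM -map_char_poly char_mu rmorph_prod big_map.
  by apply: eq_bigr => x _; exact: map_polyXsubC.
have := sum_tail_eigenvalues_le_lowrank_residualC (map_mx f N) (map_mx f X) size_fmu
  sorted_fmu char_fmu.
rewrite -map_mxM -map_mxB map_tC -map_mxM trace_map_mx -lecR.
congr (_ <= _); rewrite rmorph_sum; apply: eq_big_nat => j /andP[_ jn].
by rewrite (nth_map 0) // size_mu.
Qed.

Lemma sqnormE (R : pzRingType) n (v : 'cV[R]_n) : sqnorm v = \tr (v *m v^T).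
Proof.
by rewrite /sqnorm /mxtrace; apply: eq_bigr => i _; rewrite !mxE big_ord1 !mxE expr2.
Qed.

Lemma trace_quadratic_form (R : comPzRingType) m n (B : 'M[R]_(m, n)) (A : 'M[R]_n) :
  \tr (B *m A *m B^T) = \sum_i \sum_j (B^T *m B) i j * A i j.
Proof.
have S_sym i j : (B^T *m B) j i = (B^T *m B) i j.
  by rewrite -[in LHS](trmxK B) -trmx_mul mxE trmxK.
rewrite mxtrace_mulC mulmxA /mxtrace exchange_big /=.
by apply: eq_bigr => i _; rewrite mxE; apply: eq_bigr => j _; rewrite S_sym.
Qed.

Section SecondMoments.
Variables (R : realType) (d : measure_display) (T : measurableType d)
  (mu : {measure set T -> \bar R}).

Lemma integrable_mul_of_sq (f g : T -> R) :
  measurable_fun setT f -> measurable_fun setT g ->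
  mu.-integrable setT (fun t => (f t ^+ 2)%:E) ->
  mu.-integrable setT (fun t => (g t ^+ 2)%:E) ->
  mu.-integrable setT (fun t => (f t * g t)%:E).
Proof.
move=> mf mg if2 ig2.
have isum : mu.-integrable setT (fun t => (f t ^+ 2 + g t ^+ 2)%:E).
  by apply: eq_integrable (integrableD _ if2 ig2) => //= t _; rewrite EFinD.
apply: le_integrable isum => //.
  by apply/measurable_EFinP; exact: measurable_funM.
move=> t _; rewrite !abse_EFin lee_fin [X in _ <= X]ger0_norm ?addr_ge0 ?sqr_ge0 // normrM.
(* AM-GM: 2 |u| |v| <= u^2 + v^2 *)
have := sqr_ge0 (`|f t| - `|g t|).
rewrite sqrrB !real_normK ?num_real // => amgm.
have := mulr_ge0 (normr_ge0 (f t)) (normr_ge0 (g t)).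
lra.
Qed.

Lemma integral_quadratic_form (I : finType) (f : I -> T -> R) (c S : I -> I -> R) :
  (forall i j, mu.-integrable setT (fun t => (f i t * f j t)%:E)) ->
  (forall i j, \int[mu]_t (f i t * f j t)%:E = (S i j)%:E)%E ->
  (\int[mu]_t (\sum_i \sum_j c i j * (f i t * f j t))%:E =
    (\sum_i \sum_j c i j * S i j)%:E)%E.
Proof.
move=> iff intff.
under eq_integral do rewrite pair_bigA -sumEFin.
rewrite integral_sum //; last first.
  by move=> k; under eq_fun do rewrite EFinM; exact: integrableZl.
rewrite pair_bigA -sumEFin; apply: eq_bigr => k _.
by under eq_integral do rewrite EFinM; rewrite integralZl // intff.
Qed.

Lemma integral_sqnorm_mulmx m n (B : 'M[R]_(m, n)) (x : T -> 'cV[R]_n) (Psi : 'M[R]_n) :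
  (forall i, measurable_fun setT (fun t => x t i 0)) ->
  (forall i, mu.-integrable setT (fun t => (x t i 0 ^+ 2)%:E)) ->
  (forall i j, \int[mu]_t (x t i 0 * x t j 0)%:E = (Psi i j)%:E)%E ->
  (\int[mu]_t (sqnorm (B *m x t))%:E = (\tr (B *m Psi *m B^T))%:E)%E.
Proof.
move=> mx ix2 Psi_moments.
have sqnorm_form t :
    sqnorm (B *m x t) = \sum_i \sum_j (B^T *m B) i j * (x t i 0 * x t j 0).
  rewrite sqnormE trmx_mul mulmxA -(mulmxA B) trace_quadratic_form.
  by apply: eq_bigr => i _; apply: eq_bigr => j _; rewrite !mxE big_ord1 mxE.
under eq_integral do rewrite sqnorm_form.
rewrite trace_quadratic_form (integral_quadratic_form _ _ Psi_moments) //.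
by move=> i j; exact: integrable_mul_of_sq.
Qed.

End SecondMoments.

Theorem mainTheorem2
  (R : realType) (d : measure_display) (T : measurableType d)
  (P : probability T R)
  (n a b Z m3 m4 : nat)
  (x : T -> 'cV[R]_n) (Psi L : 'M[R]_n)
  (K3 : 'M[R]_(m3, n)) (K4 : 'M[R]_(m4, n))
  (mu3 mu4 : seq R)
  (E13 E15 : 'M[R]_(Z, a)) (E24 E25 : 'M[R]_(Z, b))
  (E56 : 'M[R]_(Z, Z + Z)) (D3 D4 : 'M[R]_(n, Z + Z)) :
  (0 < n)%N -> (0 < a)%N -> (0 < b)%N -> (0 < Z)%N ->
  (maxn a b <= n)%N -> (n <= a + b)%N -> (Z <= n)%N ->
  (forall i : 'I_n, measurable_fun setT (fun t => x t i 0)) ->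
  (forall i : 'I_n, P.-integrable setT (fun t => (x t i 0)%:E)) ->
  (forall i : 'I_n, P.-integrable setT (fun t => (x t i 0 ^+ 2)%:E)) ->
  (forall i : 'I_n, (\int[P]_t (x t i 0)%:E = 0)%E) ->
  (forall i j : 'I_n, (\int[P]_t (x t i 0 * x t j 0)%:E = (Psi i j)%:E)%E) ->
  posdef Psi ->
  cholesky Psi L ->
  sorted_eigenvalues (L^T *m K3^T *m K3 *m L) mu3 ->
  sorted_eigenvalues (L^T *m K4^T *m K4 *m L) mu4 ->
  let x1 := fun t => @first_block R a n *m x t in
  let x2 := fun t => @last_block R b n *m x t in
  let phi13 := fun t => E13 *m x1 t in
  let phi15 := fun t => E15 *m x1 t in
  let phi24 := fun t => E24 *m x2 t in
  let phi25 := fun t => E25 *m x2 t in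
  let phi56 := fun t => E56 *m col_mx (phi15 t) (phi25 t) in
  let xhat3 := fun t => D3 *m col_mx (phi13 t) (phi56 t) in
  let xhat4 := fun t => D4 *m col_mx (phi24 t) (phi56 t) in
  let L_total :=
    (\int[P]_t (sqnorm (K3 *m x t - K3 *m xhat3 t))%:E
     + \int[P]_t (sqnorm (K4 *m x t - K4 *m xhat4 t))%:E)%E in
  let L_lb := \sum_(Z + Z <= j < n) (mu3`_j + mu4`_j) in
  (L_lb%:E <= L_total)%E.
Proof.
move=> _ _ _ _ _ _ _ mx _ ix2 _ Psi_moments _ [_ _ PsiE] ev3 ev4.
cbv zeta.
(* All that reaches decoder [i] is [N *m x] for a fixed [2Z x n] matrix [N], so the
   residual is [(K - K *m D *m N) *m x]. *)
under eq_integral do rewrite !mulmxA -!mul_col_mx !mulmxA -mul_col_mx !mulmxA -mulmxBl.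
under [X in (_ + X)%E]eq_integral
  do rewrite !mulmxA -!mul_col_mx !mulmxA -mul_col_mx !mulmxA -mulmxBl.
rewrite !(integral_sqnorm_mulmx _ mx ix2 Psi_moments) PsiE -EFinD lee_fin big_split /=.
have cholesky_trace k (B : 'M[R]_(k, n)) :
    \tr (B *m (L *m L^T) *m B^T) = \tr (B *m L *m (B *m L)^T).
  by rewrite trmx_mul !mulmxA.
have residualL k (K : 'M[R]_(k, n)) D N :
    (K - K *m D *m N) *m L = K *m L - K *m D *m (N *m L).
  by rewrite mulmxBl -(mulmxA (K *m D)).
rewrite !cholesky_trace !residualL.
by apply: lerD; apply: sum_tail_eigenvalues_le_lowrank_residual; rewrite trmx_mul !mulmxA.
Qed.
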